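(* Let $A=(A_1,A_2)\in\mathbb{N}^2$ with $\gcd(A_1,A_2)=1$, let $s\ge 2$, and let $$\varphi(x,y)=\sum_{i=1}^s a_i x^{\alpha_i}y^{\beta_i},$$ where $a_i\neq 0$, $\alpha_i,\beta_i\in\mathbb{N}\cup\{0\}$, $A_1\alpha_i+A_2\beta_i=B$ for all $i$ with a common $B\in\mathbb{N}$, and $\alpha_1>\dots>\alpha_s\ge 0$. Put $g(u)=\sum_{i=1}^s a_i u^{(\alpha_1-\alpha_i)/A_2}$. Assume $a_1>0$, $a_s>0$ and $\alpha_1,\beta_1,\alpha_s,\beta_s$ are even nonnegative integers. Then $\varphi$ is nondegenerate in the weak sense (i.e. $\varphi(x,y)\neq 0$ whenever $x\neq 0$ and $y\neq 0$) if and only if $g(u)>0$ for all $u\in\mathbb{R}$, i.e. if and only if $g$ has no real roots.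
   Context: $\mathbb{N}=\{1,2,\dots\}$. The exponents $(\alpha_1-\alpha_i)/A_2$ are nonnegative integers; $g$ is the characteristic polynomial of $\varphi$, and $\varphi(x,y)=x^{\alpha_1}y^{\beta_1}g(x^{-A_2}y^{A_1})$ for $x\neq0$. *)

From mathcomp Require Import all_boot all_order all_algebra.
From mathcomp Require Import reals.
Set Implicit Arguments. Unset Strict Implicit. Unset Printing Implicit Defensive.
Import Order.TTheory GRing.Theory Num.Theory.
Local Open Scope ring_scope.

(* Indices i = 1..s of the paper are 0..s-1 here. *)

Definition phi (R : realType) (s : nat) (a : nat -> R) (alpha beta : nat -> nat)
  (x y : R) : R :=
  \sum_(i < s) a i * x ^+ alpha i * y ^+ beta i.

Definition gfun (R : realType) (s : nat) (a : nat -> R) (alpha : nat -> nat)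
  (A2 : nat) (u : R) : R :=
  \sum_(i < s) a i * u ^+ ((alpha 0%N - alpha i) %/ A2)%N.

Definition weakly_nondegenerate (R : realType) (f : R -> R -> R) : Prop :=
  forall x y : R, x != 0 -> y != 0 -> f x y != 0.

From mathcomp Require Import all_boot all_order all_algebra.
From mathcomp Require Import reals polyrcf.
From mathcomp Require Import ring zify.
Set Implicit Arguments. Unset Strict Implicit. Unset Printing Implicit Defensive.
Import Order.TTheory GRing.Theory Num.Theory.
Local Open Scope ring_scope.

(* Substituting [u = y^A1 / x^A2] factors [phi(x,y) = x^alpha_1 y^beta_1 g(u)].
   Since [gcd(A1, A2) = 1], one of [A1], [A2] is odd, so every real [u != 0] is
   of this form with [x, y != 0]: weak nondegeneracy says exactly that [g] has
   no nonzero real root.  As [g(0) = a_1 > 0], the intermediate value theorem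
   turns "no real root" into "positive everywhere". *)

Lemma odd_exp_surjective (R : rcfType) (n : nat) (c : R) :
  odd n -> exists y : R, y ^+ n = c.
Proof.
move=> n_odd; have n_gt0 : (0 < n)%N := odd_gt0 n_odd.
have [y] : {y : R | root ('X^n - c%:P) y}.
  by apply: odd_poly_root; rewrite size_XnsubC //= negbK.
by rewrite rootE !hornerE subr_eq0 => /eqP; exists y.
Qed.

Lemma coprime_odd (m n : nat) : coprime m n -> odd m || odd n.
Proof.
apply: contraLR; rewrite negb_or => /andP[m_even n_even].
apply/negP => /eqP gcd1.
have : (2 %| gcdn m n)%N by rewrite dvdn_gcd !dvdn2 m_even n_even.
by rewrite gcd1.
Qed.

Lemma exists_weighted_point (R : rcfType) (A1 A2 : nat) (u : R) :
  coprime A1 A2 -> u != 0 ->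
  exists x y : R, [/\ x != 0, y != 0 & u * x ^+ A2 = y ^+ A1].
Proof.
move=> coA u_neq0; case/orP: (coprime_odd coA) => [A1_odd | A2_odd].
- have [y yA1] := odd_exp_surjective u A1_odd.
  exists 1, y; split; rewrite ?oner_neq0 ?expr1n ?mulr1 //.
  by apply: contraNneq u_neq0 => y0; rewrite -yA1 y0 expr0n gtn_eqF ?odd_gt0.
- have [x xA2] := odd_exp_surjective u^-1 A2_odd.
  exists x, 1; split; rewrite ?oner_neq0 ?expr1n ?xA2 ?mulfV //.
  apply: contraNneq (invr_neq0 u_neq0) => x0.
  by rewrite -xA2 x0 expr0n gtn_eqF ?odd_gt0.
Qed.

Lemma poly_gt0_noroot (R : rcfType) (p : {poly R}) (c : R) :
  0 < p.[c] -> (forall x, ~~ root p x) -> forall x, 0 < p.[x].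
Proof.
move=> pc_gt0 p_noroot x.
have sgp_const := @polyrN0_itv R `]-oo, +oo[ p (fun y _ => p_noroot y).
by rewrite -sgr_cp0 (sgp_const c x) ?sgr_cp0.
Qed.

Lemma weighted_exponents_shift (A1 A2 a0 b0 ai bi : nat) :
  (0 < A2)%N -> coprime A1 A2 -> (ai <= a0)%N ->
  (A1 * ai + A2 * bi = A1 * a0 + A2 * b0)%N ->
  let k := ((a0 - ai) %/ A2)%N in
  a0 = (ai + A2 * k)%N /\ bi = (b0 + A1 * k)%N.
Proof.
move=> A2_gt0 coA le_ai_a0 same_weight k.
have weight_diff : (A2 * (bi - b0) = A1 * (a0 - ai))%N by nia.
have A2_dvd : (A2 %| a0 - ai)%N.
  by rewrite coprime_sym in coA; rewrite -(Gauss_dvdr _ coA) -weight_diff dvdn_mulr.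
have def_k : (k * A2 = a0 - ai)%N by rewrite /k divnK.
split; first by nia.
have /eqP : (A2 * (bi - b0) = A2 * (A1 * k))%N by nia.
by rewrite eqn_mul2l gtn_eqF //= => /eqP; nia.
Qed.

Section WeightedHomogeneous.

Variables (R : realType) (A1 A2 s B : nat) (a : nat -> R) (alpha beta : nat -> nat).
Hypotheses (A2_gt0 : (0 < A2)%N) (coA : coprime A1 A2) (s_gt0 : (0 < s)%N).
Hypothesis weight_eq : forall i, (i < s)%N -> (A1 * alpha i + A2 * beta i)%N = B.
Hypothesis alpha_decr : forall i j, (i < j)%N -> (j < s)%N -> (alpha j < alpha i)%N.

Local Notation phi := (phi s a alpha beta).
Local Notation g := (gfun s a alpha A2).
Local Notation gexp i := ((alpha 0%N - alpha i) %/ A2)%N.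

Lemma exponent_shift i : (i < s)%N ->
  alpha 0%N = (alpha i + A2 * gexp i)%N /\ beta i = (beta 0%N + A1 * gexp i)%N.
Proof.
move=> lt_i_s; apply: weighted_exponents_shift => //.
  by case: i lt_i_s => [|i] lt_i_s //; apply/ltnW/alpha_decr.
by rewrite !weight_eq.
Qed.

Lemma phi_factor (x y u : R) : u * x ^+ A2 = y ^+ A1 ->
  phi x y = x ^+ alpha 0%N * y ^+ beta 0%N * g u.
Proof.
move=> def_u; rewrite /phi /gfun mulr_sumr; apply: eq_bigr => i _.
have [alpha0_eq ->] := exponent_shift (ltn_ord i).
set k := gexp i; rewrite alpha0_eq !exprD !exprM -def_u exprMn; ring.
Qed.

Lemma gfun0 : g 0 = a 0%N.
Proof.
rewrite /gfun (bigD1 (Ordinal s_gt0)) //= subnn div0n mulr1 big1 ?addr0 // => i.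
rewrite -val_eqE /= -lt0n => i_gt0.
have gexp_gt0 : (0 < gexp i)%N.
  have [alpha0_eq _] := exponent_shift (ltn_ord i).
  have := alpha_decr i_gt0 (ltn_ord i); rewrite [X in (_ < X)%N]alpha0_eq; lia.
by rewrite expr0n gtn_eqF // mulr0.
Qed.

Lemma nondegenerate_of_gfun_neq0 :
  (forall u, g u != 0) -> weakly_nondegenerate phi.
Proof.
move=> g_neq0 x y x_neq0 y_neq0.
rewrite (@phi_factor x y (y ^+ A1 / x ^+ A2)); last by rewrite mulfVK ?expf_neq0.
by rewrite !mulf_neq0 ?expf_neq0.
Qed.

Lemma gfun_neq0_of_nondegenerate :
  a 0%N != 0 -> weakly_nondegenerate phi -> forall u, g u != 0.
Proof.
move=> a0_neq0 phi_nd u; have [->|u_neq0] := eqVneq u 0; first by rewrite gfun0.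
have [x [y [x_neq0 y_neq0 def_u]]] := exists_weighted_point coA u_neq0.
apply: contraNneq (phi_nd x y x_neq0 y_neq0) => gu0.
by rewrite (phi_factor def_u) gu0 mulr0.
Qed.

Lemma gfun_gt0 : 0 < a 0%N -> (forall u, g u != 0) -> forall u, 0 < g u.
Proof.
move=> a0_gt0 g_neq0.
pose p : {poly R} := \sum_(i < s) a i *: 'X^(gexp i).
have horner_p v : p.[v] = g v.
  by rewrite horner_sum; apply: eq_bigr => i _; rewrite hornerZ hornerXn.
move=> u; rewrite -horner_p; apply: (@poly_gt0_noroot _ p 0).
  by rewrite horner_p gfun0.
by move=> v; rewrite rootE horner_p.
Qed.

End WeightedHomogeneous.

Theorem mainTheorem2 (R : realType) (A1 A2 : nat) (s : nat)
  (a : nat -> R) (alpha beta : nat -> nat) (B : nat) :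
  (0 < A1)%N -> (0 < A2)%N -> coprime A1 A2 ->
  (2 <= s)%N ->
  (forall i, (i < s)%N -> a i != 0) ->
  (0 < B)%N ->
  (forall i, (i < s)%N -> (A1 * alpha i + A2 * beta i)%N = B) ->
  (forall i j, (i < j)%N -> (j < s)%N -> (alpha j < alpha i)%N) ->
  0 < a 0%N -> 0 < a s.-1 ->
  ~~ odd (alpha 0%N) -> ~~ odd (beta 0%N) ->
  ~~ odd (alpha s.-1) -> ~~ odd (beta s.-1) ->
  (weakly_nondegenerate (@phi R s a alpha beta) <->
     (forall u : R, 0 < @gfun R s a alpha A2 u)) /\
  (weakly_nondegenerate (@phi R s a alpha beta) <->
     (forall u : R, @gfun R s a alpha A2 u != 0)).
Proof.
move=> _ A2_gt0 coA s_ge2 _ _ weight_eq alpha_decr a0_gt0 _ _ _ _ _.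
have s_gt0 : (0 < s)%N by apply: leq_trans s_ge2.
have nd_iff_neq0 : weakly_nondegenerate (phi s a alpha beta) <->
    (forall u, gfun s a alpha A2 u != 0).
  split.
    exact: (gfun_neq0_of_nondegenerate A2_gt0 coA s_gt0 weight_eq alpha_decr
              (lt0r_neq0 a0_gt0)).
  exact: (nondegenerate_of_gfun_neq0 A2_gt0 coA s_gt0 weight_eq alpha_decr).
have gt0_iff_neq0 : (forall u, 0 < gfun s a alpha A2 u) <->
    (forall u, gfun s a alpha A2 u != 0).
  split=> [g_gt0 u|]; first by rewrite gt_eqF.
  exact: (gfun_gt0 A2_gt0 coA s_gt0 weight_eq alpha_decr a0_gt0).
by split=> //; apply: iff_trans nd_iff_neq0 (iff_sym gt0_iff_neq0).
Qed.
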